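(* (1) For $n\ge1$, the primary theta-seed $\Delta_1(\boldsymbol{\theta}_n)$ is nonzero. (2) For $n\ge3$, the secondary theta-seed $\Delta_2(\boldsymbol{\theta}_n)$ is nonzero.
   Context: Let $\mathbb{Q}[\boldsymbol{\theta}_n,\boldsymbol{\xi}_n,\boldsymbol{\rho}_n]$ be the $\mathbb{Q}$-algebra generated by $3n$ pairwise anticommuting variables $\theta_i,\xi_i,\rho_i$ ($1\le i\le n$) (the exterior algebra on them), with $\mathfrak{S}_n$ acting by permuting indices simultaneously in all three sets. Define $\Delta_1(\boldsymbol{\theta}_n):=\sum_{\sigma\in\mathfrak{S}_n}\mathrm{sgn}(\sigma)\sigma(\theta_1\theta_2\cdots\theta_{n-1})$ and, for $n\ge3$, $\Delta_2(\boldsymbol{\theta}_n):=\sum_{\sigma\in\mathfrak{S}_n}\mathrm{sgn}(\sigma)\sigma\bigl((\theta_1\xi_2\rho_2+\theta_2\xi_1\rho_2+\theta_2\xi_2\rho_1)\theta_3\theta_4\cdots\theta_{n-1}\bigr)$, where empty products of $\theta$'s are $1$. *)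

From HB Require Import structures.
From mathcomp Require Import all_boot all_order all_fingroup all_algebra.
Set Implicit Arguments. Unset Strict Implicit. Unset Printing Implicit Defensive.
Import GRing.Theory.
Local Open Scope ring_scope.

(* Exterior algebra over Q on the 3n generators theta_i, xi_i, rho_i.
   A generator is a pair (k, i) with k : 'I_3 (0 = theta, 1 = xi, 2 = rho)
   and i : 'I_n (index i+1 in the paper).  An element of the exterior
   algebra is a finitely supported function {set generators} -> rat:
   the coefficient of the standard basis monomial e_S = product of the
   generators of S in increasing order (order given by enum_rank). *)

Definition gen (n : nat) := ('I_3 * 'I_n)%type.

Definition ext (n : nat) := {ffun {set gen n} -> rat}.

Definition grank n (g : gen n) : nat := enum_rank g.

(* sign of the shuffle bringing e_A e_B to +- e_(A u B) *)
Definition shuffle_sign n (A B : {set gen n}) : rat :=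
  (-1) ^+ #|[set p : gen n * gen n | (p.1 \in A) && (p.2 \in B)
                                     && (grank p.2 < grank p.1)%N]|.

Definition ext_mul n (a b : ext n) : ext n :=
  [ffun S => \sum_(A : {set gen n}) \sum_(B : {set gen n}
       | (A :&: B == set0) && (A :|: B == S))
       shuffle_sign A B * a A * b B].

Definition ext_one n : ext n := [ffun S => (S == set0)%:R].

Definition ext_gen n (g : gen n) : ext n := [ffun S => (S == [set g])%:R].

Definition ext_scale n (c : rat) (a : ext n) : ext n := [ffun S => c * a S].

Definition ext_prod n (s : seq (gen n)) : ext n :=
  foldr (fun g acc => ext_mul (ext_gen g) acc) (ext_one n) s.

Definition theta n (i : 'I_n) : gen n := (0%R : 'I_3, i).
Definition xi    n (i : 'I_n) : gen n := (1%R : 'I_3, i).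
Definition rho   n (i : 'I_n) : gen n := (2%R : 'I_3, i).

(* S_n acts by permuting indices simultaneously in all three families;
   this action is by algebra automorphisms, so sigma applied to a
   monomial is the monomial in the permuted generators. *)

Definition Delta1 (n : nat) : ext n :=
  \sum_(s : 'S_n) ext_scale ((-1) ^+ s)
     (ext_prod [seq theta (s i) | i <- enum 'I_n & (val i < n.-1)%N]).

(* Delta_2(theta_n) = sum_sigma sgn(sigma) sigma((theta_1 xi_2 rho_2 +
   theta_2 xi_1 rho_2 + theta_2 xi_2 rho_1) theta_3 ... theta_{n-1}),
   for n >= 3 (indices 1,2 of the paper are inord 0, inord 1 here). *)
Definition Delta2_body (n : nat) (i1 i2 : 'I_n) : ext n :=
  \sum_(s : 'S_n) ext_scale ((-1) ^+ s)
     (let tl := [seq theta (s i) | i <- enum 'I_n & (2 <= val i < n.-1)%N] in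
      ext_prod ([:: theta (s i1); xi (s i2); rho (s i2)] ++ tl)
      + ext_prod ([:: theta (s i2); xi (s i1); rho (s i2)] ++ tl)
      + ext_prod ([:: theta (s i2); xi (s i2); rho (s i1)] ++ tl)).

Definition Delta2 (n : nat) : ext n :=
  match n return ext n with
  | m.+3 => Delta2_body (inord 0 : 'I_m.+3) (inord 1 : 'I_m.+3)
  | _ => 0
  end.

From mathcomp Require Import all_boot all_order all_fingroup all_algebra.
From mathcomp Require Import zify.
Set Implicit Arguments. Unset Strict Implicit. Unset Printing Implicit Defensive.
Import GRing.Theory Num.Theory.
Local Open Scope ring_scope.

(* Each word s(w) occurring in Delta1 and Delta2 is plus or minus a single basis
   monomial, so it suffices to exhibit a monomial e_S with nonzero coefficient.
   Take for S the support of the word of the identity permutation (for Delta2,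
   after substituting s := (1 2) s, the support of theta_2 xi_1 rho_1 theta_3 ...
   theta_(n-1)).  A word s(w) has support S only if s fixes n (and, for Delta2,
   also 1); then the sign of sorting the word is the parity of its inversions,
   which is sgn s.  The two other terms of Delta2 never have support S: in them
   xi and rho carry different indices, or theta and xi the same one.  So every
   contribution to e_S has the same sign and the identity contributes. *)

Lemma val_enum_rank (T : finType) (x : T) : val (enum_rank x) = index x (enum T).
Proof.
rewrite /enum_rank enum_rank_in.unlock insubdK //.
by rewrite -topredE /= cardE index_mem mem_enum.
Qed.

Lemma index_allpairs (A B : eqType) (s : seq A) (t : seq B) a b :
  a \in s -> b \in t ->
  index (a, b) [seq (x, y) | x <- s, y <- t] = (index a s * size t + index b t)%N.
Proof.
move=> + bt; elim: s => // a' s IH; rewrite inE /= index_cat.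
have mem_row x : ((a, b) \in [seq (x, y) | y <- t]) = (a == x).
  by apply/mapP/eqP => [[y _ [-> _]] | ->] //; exists b.
rewrite mem_row; case: (eqVneq a a') => [<- _|_ /= aS].
  by rewrite index_map // => y z [].
by rewrite size_map IH // mulSn addnA.
Qed.

Lemma neq_ord_max n (i : 'I_n.+1) : (i != ord_max) = (val i < n)%N.
Proof. by rewrite -(inj_eq val_inj) /= ltn_neqAle -ltnS ltn_ord andbT. Qed.

Lemma map_filter_enum_inord n (T : Type) (f : 'I_n.+1 -> T) (P : pred nat) :
  [seq f i | i : 'I_n.+1 <- enum 'I_n.+1 & P i]
  = [seq f (inord k) | k <- iota 0 n.+1 & P k].
Proof.
by rewrite -val_enum_ord filter_map -map_comp; apply: eq_map => i /=; rewrite inord_val.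
Qed.

Lemma map_enum_inord n (T : Type) (f : 'I_n.+1 -> T) :
  [seq f i | i <- enum 'I_n.+1] = [seq f (inord k) | k <- iota 0 n.+1].
Proof. by rewrite -val_enum_ord -map_comp; apply: eq_map => i /=; rewrite inord_val. Qed.

Lemma filter_iota_itv a b n :
  (a <= b <= n)%N -> [seq k <- iota 0 n | a <= k < b]%N = iota a (b - a).
Proof.
move=> /andP [ab bn]; have an := leq_trans ab bn.
rewrite -(subnKC an) iotaD filter_cat add0n.
rewrite (eq_in_filter (a2 := pred0)) => [|k]; last first.
  by rewrite mem_iota => /andP [_ ka]; rewrite leqNgt ka.
rewrite filter_pred0 /= (eq_in_filter (a2 := fun k => k < a + (b - a))%N) => [|k].
  by rewrite filter_iota_ltn ?leq_sub2r.
by rewrite mem_iota !subnKC // => /andP [->].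
Qed.

Lemma perm_fixed_if_unreached (T : finType) (s : {perm T}) x :
  (forall y, y != x -> s y != x) -> s x = x.
Proof.
move=> unreached; case: (eqVneq ((s^-1)%g x) x) => [e | ne]; first by rewrite -{1}e permKV.
by have := unreached _ ne; rewrite permKV eqxx.
Qed.

Lemma perm_eq_map_perm_enum (T : finType) (s : {perm T}) :
  perm_eq (map s (enum T)) (enum T).
Proof.
apply: uniq_perm; rewrite ?(map_inj_uniq perm_inj) ?enum_uniq // => x.
by rewrite mem_enum; apply/mapP; exists (s^-1 x)%g; rewrite ?mem_enum ?permKV.
Qed.

Lemma count_ltn_perm n (s : 'S_n) j :
  (j <= n)%N -> count (fun x => x < j)%N [seq val (s i) | i <- enum 'I_n] = j.
Proof.
move=> jn; rewrite (map_comp val s) (seq.permP (perm_map val (perm_eq_map_perm_enum s))).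
by rewrite val_enum_ord -size_filter (filter_iota_ltn 0) ?size_iota.
Qed.

Lemma exists_lift_perm_ord0 n (s : 'S_n.+1) :
  exists j (s' : 'S_n), s = lift_perm ord0 j s'.
Proof.
pose f k := odflt k (unlift (s ord0) (s (lift ord0 k))).
have liftE k : lift (s ord0) (f k) = s (lift ord0 k).
  have : s ord0 != s (lift ord0 k) by rewrite (inj_eq perm_inj) neq_lift.
  by rewrite /f; case/unlift_some => k' -> ->.
have f_inj : injective f.
  by move=> k1 k2 /(congr1 (lift (s ord0))); rewrite !liftE => /perm_inj /lift_inj.
exists (s ord0), (perm f_inj); apply/permP => i.
case: (unliftP ord0 i) => [k|] ->; first by rewrite lift_perm_lift permE liftE.
by rewrite lift_perm_id.
Qed.

Fixpoint inversions (r : seq nat) : nat :=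
  (if r is x :: r' then count (fun y => y < x) r' + inversions r' else 0)%N.

Lemma inversions_map_mono (f : nat -> nat) r :
  {mono f : x y / (x < y)%N} -> inversions (map f r) = inversions r.
Proof.
move=> f_mono; elim: r => //= x r ->; congr (_ + _)%N.
by rewrite count_map; apply: eq_count => y /=; rewrite f_mono.
Qed.

Lemma inversions_cons0 r : inversions (0 :: r) = inversions r.
Proof. by rewrite /= (eq_count (a2 := pred0)) ?count_pred0. Qed.

Lemma inversions_rcons_max r x :
  (forall y, y \in r -> y <= x)%N -> inversions (rcons r x) = inversions r.
Proof.
elim: r => //= y r IH r_le; rewrite IH => [|z zr]; last by rewrite r_le // inE zr orbT.
by rewrite -cats1 count_cat /= ltnNge r_le ?mem_head //= !addn0.
Qed.

Lemma odd_inversions_large_pair a b c R :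
  (a < b < c)%N -> (forall y, y \in R -> y < b)%N ->
  odd (inversions [:: a, b, c & R]) = odd (inversions (a :: R)).
Proof.
move=> /andP [ab bc] R_lt.
have count_lt d : (b <= d)%N -> count (fun y => y < d)%N R = size R.
  by move=> bd; rewrite -count_predT; apply: eq_in_count => y /R_lt /leq_trans->.
have [ba ca cb] : [/\ (b < a)%N = false, (c < a)%N = false & (c < b)%N = false].
  by split; apply/negbTE; rewrite -leqNgt ltnW // (ltn_trans ab bc).
rewrite /= ba ca cb (count_lt b) // (count_lt c) ?(ltnW bc) // !add0n.
by rewrite (addnA (size R)) addnn (addnC (size R).*2) addnA oddD odd_double addbF.
Qed.

Lemma ltn_bump2 h : {mono bump h : x y / (x < y)%N}.
Proof. by move=> x y; rewrite !ltnNge leq_bump2. Qed.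

Lemma bump_ltn h x : (bump h x < h)%N = (x < h)%N.
Proof. by rewrite /bump; case: leqP => /= hx; lia. Qed.

Lemma odd_inversions_perm n (s : 'S_n) :
  odd (inversions [seq val (s i) | i <- enum 'I_n]) = odd_perm s.
Proof.
elim: n s => [|n IH] s.
  have -> : s = 1%g by apply/permP => -[].
  by rewrite enum_ord0 odd_perm1.
have [j [s' ->]] := exists_lift_perm_ord0 s.
(* The leading entry j exceeds exactly j later entries: the [odd j] of [odd_lift_perm]. *)
rewrite enum_ordSl /= lift_perm_id -map_comp.
have -> : [seq val (lift_perm ord0 j s' (lift ord0 k)) | k <- enum 'I_n]
    = map (bump j) [seq val (s' k) | k <- enum 'I_n].
  by rewrite -map_comp; apply: eq_map => k; rewrite /= lift_perm_lift.
rewrite (inversions_map_mono _ (ltn_bump2 j)) count_map (eq_count (bump_ltn j)).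
by rewrite count_ltn_perm ?leq_ord // oddD IH odd_lift_perm.
Qed.

Lemma grankE n (k : 'I_3) (i : 'I_n) : grank (k, i) = (k * n + i)%N.
Proof.
rewrite /grank val_enum_rank enumT unlock /= /prod_enum.
by rewrite index_allpairs ?mem_enum // !index_enum_ord size_enum_ord.
Qed.

Lemma grank_theta n (i : 'I_n) : grank (theta i) = i.
Proof. exact: grankE. Qed.

Lemma grank_xi n (i : 'I_n) : grank (xi i) = (n + i)%N.
Proof. by rewrite grankE mul1n. Qed.

Lemma grank_rho n (i : 'I_n) : grank (rho i) = (n.*2 + i)%N.
Proof. by rewrite grankE mul2n. Qed.

Lemma ext_mul_genE n (g : gen n) (b : ext n) S :
  ext_mul (ext_gen g) b S =
  if g \in S then (-1) ^+ #|[set h in S :\ g | (grank h < grank g)%N]| * b (S :\ g)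
  else 0.
Proof.
rewrite ffunE (bigD1 [set g]) //= [X in _ + X]big1 ?addr0 => [|A /negbTE A_g]; last first.
  by apply: big1 => B _; rewrite ffunE A_g mulr0 mul0r.
under eq_bigr do rewrite ffunE eqxx mulr1.
have splitE B : ([set g] :&: B == set0) && ([set g] :|: B == S) = (g \in S) && (B == S :\ g).
  rewrite setI_eq0 disjoints1.
  apply/andP/andP => [[gB /eqP <-] | [gS /eqP ->]]; first by rewrite setU11 setU1K.
  by rewrite setD1K // !inE eqxx.
under eq_bigl do rewrite splitE.
case: (boolP (g \in S)) => gS; last by rewrite big_pred0.
rewrite (big_pred1 (S :\ g)) //; congr (_ * _); congr ((-1) ^+ _).
have pair_inj : injective (fun h : gen n => (g, h)) by move=> x y [].
rewrite -(card_imset _ pair_inj); apply: eq_card => -[x y].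
rewrite !inE /=; apply/andP/imsetP => [[/andP [/eqP -> yS] lt] | [h]].
  by exists y; rewrite ?inE ?yS.
by rewrite !inE => /andP [hS lt] [-> ->]; rewrite eqxx hS.
Qed.

Lemma card_set_seq_pred (T : finType) (P : pred T) (w : seq T) :
  uniq w -> #|[set x in [set:: w] | P x]| = count P w.
Proof.
move=> uw; rewrite -size_filter -(card_uniqP (filter_uniq P uw)).
by apply: eq_card => x; rewrite !inE mem_filter andbC.
Qed.

Lemma ext_prodE n (w : seq (gen n)) S :
  ext_prod w S = (uniq w && (S == [set:: w]))%:R * (-1) ^+ inversions (map (@grank n) w).
Proof.
elim: w S => [|g w IH] S.
  by rewrite ffunE set_nil mulr1.
rewrite /= ext_mul_genE IH set_cons exprD mulrA.
case: (boolP (g \in S)) => gS; last first.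
  have -> : (S == g |: [set:: w]) = false by apply: contraNF gS => /eqP ->; rewrite setU11.
  by rewrite andbF mul0r.
have -> : (S :\ g == [set:: w]) = (g \notin w) && (S == g |: [set:: w]).
  apply/eqP/andP => [wE | [gw /eqP ->]]; last by rewrite setU1K ?inE.
  split; last by rewrite -wE setD1K.
  by apply/negP => gw; have := setD11 g S; rewrite wE inE gw.
case: (boolP (g \in w)) => gw /=; first by rewrite andbF /= mulr0 !mul0r.
case: (boolP (uniq w)) => uw /=; last by rewrite mulr0 !mul0r.
case: (eqVneq S (g |: [set:: w])) => [SE | _] /=; last by rewrite mulr0 !mul0r.
by rewrite SE setU1K ?inE // card_set_seq_pred // count_map mul1r mulr1.
Qed.

Lemma ext_neq0 n (a : ext n) S : a S != 0 -> a != 0.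
Proof. by apply: contra_neq => ->; rewrite ffunE. Qed.

Lemma ext_addE n (a b : ext n) S : (a + b) S = a S + b S.
Proof. by rewrite ffunE. Qed.

Lemma ext_prod_eq0 n (w : seq (gen n)) S : [set:: w] != S -> ext_prod w S = 0.
Proof. by move=> wS; rewrite ext_prodE eq_sym (negbTE wS) andbF mul0r. Qed.

Lemma sum_ext_prod_coef_neq0 n (I : finType) (e : I -> rat) (W : I -> seq (gen n))
    (i0 : I) S c :
  c != 0 -> [set:: W i0] = S ->
  (forall i, [set:: W i] = S -> e i * ext_prod (W i) S = c) ->
  \sum_i e i * ext_prod (W i) S != 0.
Proof.
move=> c_neq0 W_i0 W_c.
have termE i : e i * ext_prod (W i) S = c * ([set:: W i] == S)%:R.
  by case: eqP => [/W_c -> | /eqP /ext_prod_eq0 ->]; rewrite ?mulr1 ?mulr0.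
rewrite (eq_bigr _ (fun i _ => termE i)) -mulr_sumr mulf_neq0 //.
rewrite psumr_neq0 => [|i _]; last exact: ler0n.
by apply/hasP; exists i0; rewrite ?mem_index_enum // W_i0 eqxx ltr01.
Qed.

Lemma mem_theta_word n (s : 'S_n) (P : pred 'I_n) (k : 'I_3) a :
  ((k, a) \in [seq theta (s i) | i <- enum 'I_n & P i]) = (k == 0) && P ((s^-1)%g a).
Proof.
apply/mapP/andP => [[i] | [/eqP -> Pa]].
  by rewrite mem_filter mem_enum andbT => Pi [-> ->]; rewrite permK.
by exists ((s^-1)%g a); rewrite ?permKV // mem_filter mem_enum andbT.
Qed.

Lemma uniq_theta_word n (s : 'S_n) (P : pred 'I_n) :
  uniq [seq theta (s i) | i <- enum 'I_n & P i].
Proof.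
have theta_s_inj : injective (@theta n \o s) by move=> i j [/perm_inj].
by rewrite (map_inj_uniq theta_s_inj); apply/filter_uniq/enum_uniq.
Qed.

Section Delta1.

Variable m : nat.
Local Notation n := m.+1.

Definition delta1_word (s : 'S_n) : seq (gen n) :=
  [seq theta (s i) | i <- enum 'I_n & (val i < m)%N].

Definition delta1_support : {set gen n} := [set:: delta1_word 1].

Lemma Delta1E :
  Delta1 n = \sum_(s : 'S_n) ext_scale ((-1) ^+ s) (ext_prod (delta1_word s)).
Proof. by []. Qed.

Lemma delta1_word_fix_max (s : 'S_n) :
  [set:: delta1_word s] = delta1_support -> s ord_max = ord_max.
Proof.
move=> supp_s; apply: perm_fixed_if_unreached => y y_max.
have : theta (s y) \in delta1_support.
  by rewrite -supp_s inE mem_theta_word permK /= -neq_ord_max.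
by rewrite inE mem_theta_word invg1 perm1 /= -neq_ord_max.
Qed.

Lemma inversions_delta1_word (s : 'S_n) : s ord_max = ord_max ->
  inversions (map (@grank n) (delta1_word s)) = inversions [seq val (s i) | i <- enum 'I_n].
Proof.
move=> s_max.
have -> : map (@grank n) (delta1_word s) = [seq val (s (inord k)) | k <- iota 0 m].
  rewrite -map_comp (eq_map (g := fun i => val (s i))) => [|i]; last exact: grank_theta.
  by rewrite (map_filter_enum_inord _ (fun k => k < m)%N) (filter_iota_ltn 0).
have s_max' : val (s (inord m)) = m.
  by rewrite (_ : inord m = ord_max) ?s_max //; apply: val_inj; rewrite /= inordK.
have iotaS : iota 0 m.+1 = rcons (iota 0 m) m by rewrite -cats1 -(iotaD 0 m 1) addn1.
rewrite map_enum_inord iotaS map_rcons s_max' inversions_rcons_max //.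
by move=> _ /mapP [k _ ->]; apply: leq_ord.
Qed.

Lemma Delta1_neq0 : Delta1 n != 0.
Proof.
apply: (@ext_neq0 _ _ delta1_support); rewrite Delta1E sum_ffunE.
under eq_bigr do rewrite ffunE.
apply: (sum_ext_prod_coef_neq0 (i0 := 1%g) (c := 1)) => // s supp_s.
rewrite ext_prodE uniq_theta_word supp_s eqxx mul1r.
rewrite inversions_delta1_word ?delta1_word_fix_max //.
by rewrite -(signr_odd _ (inversions _)) odd_inversions_perm -signr_addb addbb.
Qed.

End Delta1.

Section Delta2.

Variable m : nat.
Local Notation n := m.+3.
Local Notation i1 := (inord 0 : 'I_n).
Local Notation i2 := (inord 1 : 'I_n).

Lemma val_i1 : val i1 = 0%N. Proof. exact: inordK. Qed.
Lemma val_i2 : val i2 = 1%N. Proof. exact: inordK. Qed.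

Lemma i1_neq_i2 : i1 != i2.
Proof. by rewrite -(inj_eq val_inj) val_i1 val_i2. Qed.

Definition swap12 : 'S_n := tperm i1 i2.

Definition theta_tail (s : 'S_n) : seq (gen n) :=
  [seq theta (s i) | i <- enum 'I_n & (2 <= val i < m.+2)%N].

Definition delta2_word (s : 'S_n) : seq (gen n) :=
  [:: theta (s i2); xi (s i1); rho (s i1)] ++ theta_tail s.

Definition delta2_support : {set gen n} := [set:: delta2_word 1].

Lemma Delta2E : Delta2 n = \sum_(s : 'S_n) ext_scale ((-1) ^+ (swap12 * s)%g)
  (ext_prod (delta2_word s)
   + ext_prod ([:: theta (s i1); xi (s i2); rho (s i1)] ++ theta_tail s)
   + ext_prod ([:: theta (s i1); xi (s i1); rho (s i2)] ++ theta_tail s)).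
Proof.
rewrite [Delta2 n]/Delta2 /Delta2_body (reindex_inj (mulgI swap12)).
apply: eq_bigr => s _; rewrite !permM tpermL tpermR.
congr (ext_scale _ (ext_prod (_ ++ _) + ext_prod (_ ++ _) + ext_prod (_ ++ _)));
  apply/eq_in_map => i; rewrite mem_filter => /andP [/andP [i_ge2 _] _];
  by rewrite permM tpermD // -(inj_eq val_inj) ?val_i1 ?val_i2 neq_ltn
       ?i_ge2 ?(ltnW i_ge2).
Qed.

Lemma theta_in_delta2_support a : (theta a \in delta2_support) = (0 < val a < m.+2)%N.
Proof.
rewrite inE mem_cat !inE mem_theta_word invg1 !perm1 !xpair_eqE /= orbF.
by rewrite -(inj_eq val_inj) val_i2; case: a => [[|[|k]] ?].
Qed.

Lemma xi_in_delta2_support a : (xi a \in delta2_support) = (a == i1).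
Proof. by rewrite inE mem_cat !inE mem_theta_word !xpair_eqE /= !perm1 /= !orbF. Qed.

Lemma rho_in_delta2_support a : (rho a \in delta2_support) = (a == i1).
Proof. by rewrite inE mem_cat !inE mem_theta_word !xpair_eqE /= !perm1 /= !orbF. Qed.

Lemma delta2_coef_xi_rho_apart (s : 'S_n) :
  ext_prod ([:: theta (s i1); xi (s i2); rho (s i1)] ++ theta_tail s) delta2_support = 0.
Proof.
apply: ext_prod_eq0; apply/eqP => supp.
have /eqP s_i2 : s i2 == i1.
  by rewrite -xi_in_delta2_support -supp inE mem_cat !inE eqxx !orbT.
have /eqP s_i1 : s i1 == i1.
  by rewrite -rho_in_delta2_support -supp inE mem_cat !inE eqxx !orbT.
by have := i1_neq_i2; rewrite -(inj_eq (@perm_inj _ s)) s_i1 s_i2 eqxx.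
Qed.

Lemma delta2_coef_theta_xi_shared (s : 'S_n) :
  ext_prod ([:: theta (s i1); xi (s i1); rho (s i2)] ++ theta_tail s) delta2_support = 0.
Proof.
apply: ext_prod_eq0; apply/eqP => supp.
have /eqP s_i1 : s i1 == i1.
  by rewrite -xi_in_delta2_support -supp inE mem_cat !inE eqxx !orbT.
have : theta (s i1) \in delta2_support by rewrite -supp inE mem_cat !inE eqxx.
by rewrite theta_in_delta2_support s_i1 val_i1.
Qed.

Lemma delta2_word_fix (s : 'S_n) :
  [set:: delta2_word s] = delta2_support -> s i1 = i1 /\ s ord_max = ord_max.
Proof.
move=> supp.
have /eqP s_i1 : s i1 == i1.
  by rewrite -xi_in_delta2_support -supp inE mem_cat !inE eqxx !orbT.
split => //; apply: perm_fixed_if_unreached => y y_max.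
have [-> | y_i1] := eqVneq y i1; first by rewrite s_i1 neq_ord_max val_i1.
have : theta (s y) \in delta2_support.
  rewrite -supp inE mem_cat !inE mem_theta_word permK !xpair_eqE /= (inj_eq perm_inj).
  move: y_i1 y_max; rewrite neq_ord_max -!(inj_eq val_inj) val_i1 val_i2.
  by case: y => [[|[|k]] ?].
by rewrite theta_in_delta2_support -neq_ord_max => /andP [].
Qed.

Lemma uniq_delta2_word (s : 'S_n) : uniq (delta2_word s).
Proof.
rewrite cat_uniq uniq_theta_word andbT /=.
apply/hasPn => -[k a]; rewrite mem_theta_word => /andP [/eqP -> a_tail].
rewrite !inE !xpair_eqE /= orbF; apply: contraTN a_tail => /eqP ->.
by rewrite permK val_i2.
Qed.

Lemma odd_inversions_delta2_word (s : 'S_n) : s i1 = i1 -> s ord_max = ord_max ->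
  odd (inversions (map (@grank n) (delta2_word s))) = odd_perm s.
Proof.
move=> s_i1 s_max.
have tailE : map (@grank n) (theta_tail s) = [seq val (s (inord k)) | k <- iota 2 m].
  rewrite -map_comp (eq_map (g := fun i => val (s i))) => [|i]; last exact: grank_theta.
  rewrite (map_filter_enum_inord _ (fun k => 2 <= k < m.+2)%N).
  by rewrite filter_iota_itv ?subn2 ?leqnSn.
rewrite map_cat tailE /= grank_theta grank_xi grank_rho s_i1 val_i1 !addn0.
rewrite odd_inversions_large_pair => [|| _ /mapP [k _ ->]]; last exact: ltn_ord.
- have iotaE : iota 0 n = [:: 0, 1 & rcons (iota 2 m) m.+2].
    by rewrite -cats1 -(iotaD 2 m 1) addn1.
  have s_max' : val (s (inord m.+2)) = m.+2.
    by rewrite (_ : inord m.+2 = ord_max) ?s_max //; apply: val_inj; rewrite /= inordK.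
  rewrite -odd_inversions_perm map_enum_inord.
  have -> : [seq val (s (inord k)) | k <- iota 0 n]
      = [:: 0, val (s i2) & rcons [seq val (s (inord k)) | k <- iota 2 m] m.+2].
    by rewrite iotaE /= map_rcons s_i1 val_i1 s_max'.
  rewrite inversions_cons0 -rcons_cons inversions_rcons_max // => y.
  by rewrite inE => /predU1P [-> | /mapP [k _ ->]]; apply: leq_ord.
- by rewrite ltn_ord /=; lia.
Qed.

Lemma Delta2_neq0 : Delta2 n != 0.
Proof.
apply: (@ext_neq0 _ _ delta2_support); rewrite Delta2E sum_ffunE.
under eq_bigr do
  rewrite ffunE !ext_addE delta2_coef_xi_rho_apart delta2_coef_theta_xi_shared !addr0.
apply: (sum_ext_prod_coef_neq0 (i0 := 1%g) (c := -1)) => // s supp_s.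
have [s_i1 s_max] := delta2_word_fix supp_s.
rewrite ext_prodE uniq_delta2_word supp_s eqxx mul1r -(signr_odd _ (inversions _)).
rewrite odd_inversions_delta2_word // odd_permM signr_addb odd_tperm i1_neq_i2.
by rewrite expr1 mulN1r mulNr -signr_addb addbb.
Qed.

End Delta2.

Theorem proposition4p5 :
  (forall n : nat, (1 <= n)%N -> Delta1 n != 0) /\
  (forall n : nat, (3 <= n)%N -> Delta2 n != 0).
Proof.
split; first by case=> // m _; apply: Delta1_neq0.
by case=> [|[|[|m]]] // _; apply: Delta2_neq0.
Qed.
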